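(* Let $S^*$ be a size-$k$ node set that is independent of a collection $\mathcal R_2$ of $\theta_2$ independent random RDR sets, and let $\Lambda_2(S^* )=\frac{\hat{INF}_F}{n}\mathcal W_{\mathcal R_2}(S^* )$. For any $\delta\in(0,1)$, with $a=\ln(1/\delta)$, $$\Pr\Big[\sigma(S^* )\ \ge\ \Big(\Big(\sqrt{\Lambda_2(S^* )+\tfrac{25a}{36}}-\sqrt a\Big)^2-\tfrac{a}{36}\Big)\frac{n}{\theta_2(1+\epsilon')}\Big]\ \ge\ 1-\delta .$$
   Context: Setting: $G=(V,E)$ is a directed graph with $n=|V|$ nodes. A misinformation campaign $F$ spreads in $G$ under the paper's competitive propagation model (TCIC); $INF_F$ is the expected number of nodes reached by $F$. $\sigma(\cdot)$ denotes either of the two submodular set functions (lower bound $\underline\mu$ or upper bound $\overline\mu$ of the expected misinformation-mitigation function). $\hat{INF}_F$ is an $(\epsilon',\delta')$-approximation of $INF_F$, and $\Gamma=\hat{INF}_F/INF_F$; throughout, $\hat{INF}_F$ is treated as fixed with $1-\epsilon'\le\Gamma\le1+\epsilon'$, and $\hat{INF}_F\le n$. Each random RDR set (generated by importance sampling) carries a weight; $\mathcal W_{\mathcal R}(S)$ is the total weight of RDR sets in $\mathcal R$ covered by $S$, and $\frac{\hat{INF}_F}{n}\mathcal W_{\mathcal R}(S)=\sum_i\hat Z_i(S)$ where $\hat Z_i(S)$ is the estimator of the $i$-th set, with $\mathbb E[\hat Z_i(S)]=\Gamma\sigma(S)/n$ and, for $p=\mathbb E[\hat Z_i(S)]$, $\lambda>0$: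 $\Pr[\sum_{i\le\theta}\hat Z_i(S)-\theta p\ge\lambda]\le\exp(-\lambda^2/(\tfrac23\lambda+4\theta p\hat{INF}_F/n))$ and $\Pr[\sum_{i\le\theta}\hat Z_i(S)-\theta p\le-\lambda]\le\exp(-\lambda^2/(4\theta p\hat{INF}_F/n))$. *)

From HB Require Import structures.
From mathcomp Require Import all_boot all_order all_algebra.
From mathcomp Require Import all_classical all_reals all_analysis.
Set Implicit Arguments. Unset Strict Implicit. Unset Printing Implicit Defensive.
Import Order.TTheory GRing.Theory Num.Theory.
Local Open Scope ring_scope.

(* Lambda_2(S^* ) = (hatINF_F / n) W_{R_2}(S^* ) = sum_{i < theta2} hatZ_i(S^* )(omega) *)
Definition Lambda2 {d} {T : measurableType d} {R : realType} (theta2 : nat)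
  (Z : 'I_theta2 -> T -> R) (w : T) : R := \sum_(i < theta2) Z i w.

From HB Require Import structures.
From mathcomp Require Import all_boot all_order all_algebra.
From mathcomp Require Import all_classical all_reals all_analysis.
From mathcomp Require Import ring lra measurable_realfun.
Set Implicit Arguments. Unset Strict Implicit. Unset Printing Implicit Defensive.
Import Order.TTheory GRing.Theory Num.Theory.
Local Open Scope classical_set_scope.
Local Open Scope ring_scope.

(* Let mu = theta2 p be the mean of Lambda_2(S^* ) and let
   r = a/3 + 2 sqrt(a) sqrt(mu + a/36), the positive root of r^2 = a (2r/3 + 4 mu).
   Since hatINF <= n, the upper-tail bound at lambda = r shows that
   Lambda_2 >= mu + r has probability at most exp(-a) = delta.  Off that event, with
   s = sqrt a, t = sqrt(mu + a/36) and u = sqrt(Lambda_2 + 25a/36), one has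
   5s/6 <= u < s + t and s/6 <= t, hence (u - s)^2 <= t^2, i.e.
   (u - s)^2 - a/36 <= mu; and mu n / (theta2 (1 + eps')) = Gamma sigma(S^* ) / (1 + eps')
   is at most sigma(S^* ). *)

Section Scaling.
Variable R : realFieldType.

Lemma variance_proxy_bounds (theta p h n : R) : 0 <= theta -> 0 <= p -> 0 <= p * h ->
  0 <= n -> h <= n -> 0 <= 4 * theta * p * h / n <= 4 * (theta * p).
Proof.
move=> theta_ge0 p_ge0 ph_ge0 n_ge0 h_le.
have -> : 4 * theta * p * h / n = 4 * (theta * (p * h / n)) by rewrite !mulrA.
have [->|n_neq0] := eqVneq n 0; first by rewrite invr0 !mulr0 lexx !mulr_ge0.
have n_gt0 : 0 < n by rewrite lt_def n_neq0.
have ph_le : p * h / n <= p by rewrite ler_pdivrMr // ler_wpM2l.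
have phn_ge0 := divr_ge0 ph_ge0 n_ge0.
by apply/andP; split; nra.
Qed.

Lemma mean_threshold_le (theta n G s e : R) : 0 < theta -> 0 <= n -> 0 < 1 + e ->
  0 <= s -> G <= 1 + e -> theta * (G * s / n) * (n / (theta * (1 + e))) <= s.
Proof.
move=> theta_gt0 n_ge0 e_gt0 s_ge0 G_le.
have [->|n_neq0] := eqVneq n 0; first by rewrite invr0 !mulr0 mul0r.
have -> : theta * (G * s / n) * (n / (theta * (1 + e))) = G * s / (1 + e).
  by field; rewrite n_neq0 !gt_eqF.
by rewrite ler_pdivrMr // mulrC ler_wpM2l.
Qed.

End Scaling.

Section BernsteinRadius.
Variable R : realType.
Implicit Types a mu v L : R.

Definition bernstein_radius a mu := a / 3 + 2 * Num.sqrt a * Num.sqrt (mu + a / 36).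

Definition lower_conf a L := (Num.sqrt (L + 25 * a / 36) - Num.sqrt a) ^+ 2 - a / 36.

Lemma bernstein_radius_gt0 a mu : 0 < a -> 0 <= mu -> 0 < bernstein_radius a mu.
Proof.
move=> a_gt0 mu_ge0; rewrite /bernstein_radius.
have := mulr_ge0 (sqrtr_ge0 a) (sqrtr_ge0 (mu + a / 36)); lra.
Qed.

Lemma sqr_bernstein_radius a mu : 0 <= a -> 0 <= mu ->
  bernstein_radius a mu ^+ 2 = a * (2 / 3 * bernstein_radius a mu + 4 * mu).
Proof.
move=> a_ge0 mu_ge0; rewrite /bernstein_radius.
have s2 : Num.sqrt a ^+ 2 = a by rewrite sqr_sqrtr.
have t2 : Num.sqrt (mu + a / 36) ^+ 2 = mu + a / 36 by rewrite sqr_sqrtr //; lra.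
move: s2 t2; set s := Num.sqrt a; set t := Num.sqrt _ => s2 t2.
have -> : mu = t ^+ 2 - a / 36 by lra.
by rewrite -s2; field.
Qed.

Lemma expR_bernstein_radius_le a mu v : 0 < a -> 0 <= mu -> 0 <= v <= 4 * mu ->
  expR (- bernstein_radius a mu ^+ 2 / (2 / 3 * bernstein_radius a mu + v))
  <= expR (- a).
Proof.
move=> a_gt0 mu_ge0 /andP[v_ge0 v_le].
have r_gt0 := bernstein_radius_gt0 a_gt0 mu_ge0.
rewrite ler_expR mulNr lerN2 ler_pdivlMr; last lra.
rewrite (sqr_bernstein_radius (ltW a_gt0) mu_ge0) ler_pM2l //; lra.
Qed.

Lemma lower_conf_le a mu L : 0 < a -> 0 <= mu -> 0 <= L ->
  L < mu + bernstein_radius a mu -> lower_conf a L <= mu.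
Proof.
move=> a_gt0 mu_ge0 L_ge0; rewrite /lower_conf /bernstein_radius.
have s2 : Num.sqrt a ^+ 2 = a by rewrite sqr_sqrtr // ltW.
have t2 : Num.sqrt (mu + a / 36) ^+ 2 = mu + a / 36 by rewrite sqr_sqrtr //; lra.
have u2 : Num.sqrt (L + 25 * a / 36) ^+ 2 = L + 25 * a / 36 by rewrite sqr_sqrtr //; lra.
have := sqrtr_ge0 a; have := sqrtr_ge0 (mu + a / 36); have := sqrtr_ge0 (L + 25 * a / 36).
move: s2 t2 u2; set s := Num.sqrt a; set t := Num.sqrt (_ + _); set u := Num.sqrt _.
move=> s2 t2 u2 u_ge0 t_ge0 s_ge0 L_lt.
have u_lt : u < t + s.
  by rewrite -(ltr_pXn2r (n := 2)) ?nnegrE //; lra.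
have u_ge : 5 * s / 6 <= u.
  by rewrite -(ler_pXn2r (n := 2)) ?nnegrE //; lra.
have t_ge : s / 6 <= t.
  by rewrite -(ler_pXn2r (n := 2)) ?nnegrE //; lra.
suff : (u - s) ^+ 2 <= t ^+ 2 by lra.
have below : 0 <= t - (u - s) by lra.
have above : 0 <= t + (u - s) by lra.
have := mulr_ge0 below above; nra.
Qed.

End BernsteinRadius.

Section ProbabilityFacts.
Context d (T : measurableType d) (R : realType) (P : probability T R).

Lemma probability_ge_compl (A B : set T) (delta : R) :
  measurable A -> measurable B -> ~` A `<=` B -> (P A <= delta%:E)%E ->
  ((1 - delta)%:E <= P B)%E.
Proof.
move=> mA mB AcB PA_le.
have PAc : P (~` A) = (1 - P A)%E := probability_setC P mA.
apply: (le_trans _ (le_measure _ _ _ AcB)); rewrite ?inE //; last exact: measurableC.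
apply: (@le_trans _ _ (1 - P A)%E); first by rewrite EFinB leeB.
by rewrite -PAc.
Qed.

Lemma measurable_ler_set (f g : T -> R) :
  measurable_fun setT f -> measurable_fun setT g -> measurable [set w | f w <= g w].
Proof.
move=> mf mg; have := measurable_funB mg mf measurableT (measurable_itv `[0, +oo[).
by rewrite setTI; congr measurable; apply/seteqP; split=> w /=; rewrite in_itv /= andbT subr_ge0.
Qed.

Lemma measurable_lower_conf a (f : T -> R) :
  measurable_fun setT f -> measurable_fun setT (fun w => lower_conf a (f w)).
Proof.
move=> mf; apply: measurable_funB => //; apply: measurable_funX.
apply: measurable_funB => //.
exact: measurableT_comp (continuous_measurable_fun (@sqrt_continuous R)) (measurable_funD mf _).
Qed.

End ProbabilityFacts.

Section Lambda2Facts.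
Context d (T : measurableType d) (R : realType) (theta2 : nat) (Z : 'I_theta2 -> T -> R).

Lemma Lambda2_filterE : Lambda2 Z = fun w => \sum_(i < theta2 | (i < theta2)%N) Z i w.
Proof. by apply/funext => w; apply: eq_bigl => i; rewrite ltn_ord. Qed.

Lemma Lambda2_ge0 w : (forall i w, 0 <= Z i w) -> 0 <= Lambda2 Z w.
Proof. by move=> Z_ge0; apply: sumr_ge0. Qed.

Lemma measurable_Lambda2 :
  (forall i, measurable_fun setT (Z i)) -> measurable_fun setT (Lambda2 Z).
Proof. exact: measurable_sum. Qed.

End Lambda2Facts.

Theorem mainTheorem5
  (R : realType) (d : measure_display) (T : measurableType d)
  (P : probability T R)
  (V : finType) (sigma : {set V} -> R) (Sstar : {set V}) (k : nat)
  (INF hatINF eps' : R) (theta2 : nat) (Z : 'I_theta2 -> T -> R)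
  (delta : R) :
  let n : R := #|V|%:R in
  let Gamma := hatINF / INF in
  let p := Gamma * sigma Sstar / n in
  #|Sstar| = k ->
  (forall S, 0 <= sigma S) ->
  0 < INF -> 0 < eps' -> 1 - eps' <= Gamma -> Gamma <= 1 + eps' ->
  hatINF <= n ->
  (0 < theta2)%N ->
  (* each estimator hatZ_i(S^* ) is a nonnegative random variable *)
  (forall i, measurable_fun setT (Z i)) ->
  (forall i w, 0 <= Z i w) ->
  (* E[hatZ_i(S^* )] = Gamma sigma(S^* ) / n = p *)
  (forall i, ('E_P[Z i])%E = p%:E) ->
  (* the two concentration bounds for the first m estimators *)
  (forall (m : nat) (lambda : R), (m <= theta2)%N -> 0 < lambda ->
     (P [set w | (\sum_(i < theta2 | (i < m)%N) Z i w - m%:R * p >= lambda)%R]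
      <= (expR (- lambda ^+ 2 / (2 / 3 * lambda + 4 * m%:R * p * hatINF / n)))%:E)%E) ->
  (forall (m : nat) (lambda : R), (m <= theta2)%N -> 0 < lambda ->
     (P [set w | (\sum_(i < theta2 | (i < m)%N) Z i w - m%:R * p <= - lambda)%R]
      <= (expR (- lambda ^+ 2 / (4 * m%:R * p * hatINF / n)))%:E)%E) ->
  0 < delta < 1 ->
  let a := ln (1 / delta) in
  (P [set w | (sigma Sstar >=
       ((Num.sqrt (Lambda2 Z w + 25 * a / 36) - Num.sqrt a) ^+ 2 - a / 36)
       * (n / (theta2%:R * (1 + eps'))))%R]
   >= (1 - delta)%:E)%E.
Proof.
move=> n Gamma p _ sigma_ge0 INF_gt0 eps'_gt0 _ Gamma_le hatINF_le theta2_gt0 mZ Z_ge0 EZ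
  upper_tail _ /andP[delta_gt0 delta_lt1].
cbv zeta; set a := ln (1 / delta).
have a_gt0 : 0 < a by rewrite /a ln_gt0 // div1r invf_gt1.
have expR_Na : expR (- a) = delta by rewrite /a div1r lnV ?posrE // opprK lnK ?posrE.
have n_ge0 : 0 <= n by rewrite /n ler0n.
have theta2_gt0R : 0 < theta2%:R :> R by rewrite ltr0n.
have p_ge0 : 0 <= p.
  by have := expectation_ge0 P (Z_ge0 (Ordinal theta2_gt0)); rewrite EZ lee_fin.
have phat_ge0 : 0 <= p * hatINF.
  have -> : p * hatINF = hatINF ^+ 2 * (sigma Sstar / INF / n) by rewrite /p /Gamma expr2; ring.
  by rewrite mulr_ge0 ?sqr_ge0 // !divr_ge0 // ltW.
set mu := theta2%:R * p.
have mu_ge0 : 0 <= mu by rewrite mulr_ge0 // ltW.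
have r_gt0 := bernstein_radius_gt0 a_gt0 mu_ge0.
have mLambda2 := measurable_Lambda2 mZ.
apply: (@probability_ge_compl _ _ _ _ [set w | bernstein_radius a mu <= Lambda2 Z w - mu]).
- by apply: measurable_ler_set; last exact: measurable_funB.
- apply: measurable_ler_set => //.
  exact: measurable_funM (measurable_lower_conf a mLambda2) (measurable_cst _).
- move=> w /negP; rewrite -ltNge /= => Lambda2_lt.
  have eps'1_gt0 : 0 < 1 + eps' by lra.
  apply: le_trans (mean_threshold_le theta2_gt0R n_ge0 eps'1_gt0 (sigma_ge0 _) Gamma_le).
  rewrite ler_wpM2r ?divr_ge0 ?mulr_ge0 ?(ltW theta2_gt0R) ?(ltW eps'1_gt0) //.
  by apply: lower_conf_le; rewrite ?Lambda2_ge0 // -/p -/mu; lra.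
- rewrite Lambda2_filterE; apply: le_trans (upper_tail _ _ (leqnn _) r_gt0) _.
  rewrite lee_fin (le_trans (expR_bernstein_radius_le a_gt0 mu_ge0 _)) ?expR_Na //.
  exact: variance_proxy_bounds (ltW theta2_gt0R) p_ge0 phat_ge0 n_ge0 hatINF_le.
Qed.
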